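(* Let $k\ge1$, $\beta>0$, $J,J_p\in\mathbb{R}$, $a=e^{2\beta J}$, $b=e^{2\beta J_p}$. Let $\mathbf{u}=\{\mathbf{u}_{xy}\}$, with $\mathbf{u}_{xy}=(u_{xy,1},u_{xy,2},u_{xy,3})\in(0,\infty)^3$ for each $x\in V$ and $y\in S(x)$, satisfy for every such edge $$u_{xy,1}=a\prod_{z\in S(y)}\frac{b u_{yz,3}+1}{u_{yz,3}+b},\quad u_{xy,2}=a\prod_{z\in S(y)}\frac{(b u_{yz,2}+1)u_{yz,3}}{(u_{yz,3}+b)u_{yz,1}},\quad u_{xy,3}=a\prod_{z\in S(y)}\frac{(b u_{yz,3}+1)u_{yz,1}}{(u_{yz,2}+b)u_{yz,3}}.$$ Then two things hold. (i) There exist boundary fields $\mathbf{h}$ with $u_{xy,1}=a e^{h_{xy,++}+h_{xy,-+}}$, $u_{xy,2}=a e^{h_{xy,--}+h_{xy,-+}}$ and $u_{xy,3}=a e^{h_{xy,++}+h_{xy,+-}}$ for all edges, such that the measures $\mu^{(n)}_{\mathbf{h}}$ are compatible. (ii) All boundary fields $\mathbf{h}$ satisfying these relations give the same family $\{\mu^{(n)}_{\mathbf{h}}\}_{n\ge1}$. Consequently there is a unique Gibbs measure $\mu_{\mathbf{u}}$ associated with $\mathbf{u}$.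
   Context: $\Gamma^k_+=(V,\Lambda)$ is the semi-infinite Cayley tree of order $k$ with root $x^0$. We write $|x|=d(x,x^0)$, $W_n=\{|x|=n\}$, $V_n=\{|x|\le n\}$, and $S(x)$ for the set of direct successors of $x$. Nearest neighbours $\langle x,y\rangle$ satisfy $d(x,y)=1$. Prolonged next-nearest neighbours $\widetilde{>x,y<}$ satisfy $d(x,y)=2$ and $|x|\ne|y|$. The Hamiltonian is $$H_n(\sigma)=-J_p\sum_{\widetilde{>x,y<}\subset V_n}\sigma(x)\sigma(y)-J\sum_{\langle x,y\rangle\subset V_n}\sigma(x)\sigma(y)$$ for $\sigma\in\{-1,+1\}^{V_n}$. A boundary field $\mathbf{h}$ assigns reals $h_{xy,++},h_{xy,+-},h_{xy,-+},h_{xy,--}$ to each edge. The measures are $$\mu^{(n)}_{\mathbf{h}}(\sigma)=Z_n^{-1}\exp\Big[-\beta H_n(\sigma)+\sum_{x\in W_{n-1}}\sum_{y\in S(x)}\sigma(x)\sigma(y)h_{xy,\sigma(x)\sigma(y)}\Big],$$ with $Z_n$ the normalizing constant. They are compatible if $\sum_{\omega\in\{-1,+1\}^{W_n}}\mu^{(n)}_{\mathbf{h}}(\sigma\vee\omega)=\mu^{(n-1)}_{\mathbf{h}}(\sigma)$ for all $n\ge2$ and all $\sigma\in\{-1,+1\}^{V_{n-1}}$. A compatible family determines, by Kolmogorov's theorem, a unique probability measure on $\{-1,+1\}^V$ with these marginals, called a Gibbs measure. *)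

From HB Require Import structures.
From mathcomp Require Import all_boot all_order all_algebra.
From mathcomp Require Import reals sequences exp.
Set Implicit Arguments. Unset Strict Implicit. Unset Printing Implicit Defensive.
Import Order.TTheory GRing.Theory Num.Theory.
Local Open Scope ring_scope.

(* Vertices of the semi-infinite Cayley tree of order k: finite words over
   'I_k; the root x^0 is the empty word, |x| = size x, and the direct
   successors of x are the words rcons x i (i : 'I_k). *)
Definition word (k : nat) := seq 'I_k.

Definition level (k m : nat) : seq (word k) :=
  [seq val t | t <- enum {: m.-tuple 'I_k}].

Definition ball (k n : nat) : seq (word k) :=
  flatten [seq level k m | m <- iota 0 n.+1].

(* Spin configurations: true = +1, false = -1.  A configuration on the whole
   tree; quantities indexed by n only depend on its restriction to V_n. *)
Definition spin {R : pzRingType} (b : bool) : R := if b then 1 else -1.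

Definition glue (k : nat) (L : seq (word k)) (om : {ffun seq_sub L -> bool})
  (sg : word k -> bool) : word k -> bool :=
  fun x => match (insub x : option (seq_sub L)) with
           | Some v => om v
           | None => sg x
           end.

(* Boundary field: h x i s t = h_{xy, s t} for the edge x -> y = rcons x i,
   where s is the sign of sigma(x) and t the sign of sigma(y). *)
Definition bfield (R : realType) (k : nat) := word k -> 'I_k -> bool -> bool -> R.

(* H_n(sigma): prolonged next-nearest-neighbour pairs in V_n are exactly the
   pairs (x, x ++ [:: i; j]) with |x| + 2 <= n; nearest-neighbour pairs in V_n
   are (x, rcons x i) with |x| + 1 <= n; each unordered pair counted once. *)
Definition Ham (R : realType) (k : nat) (J Jp : R) (n : nat) (sg : word k -> bool) : R :=
  - Jp * (\sum_(x <- ball k n | (size x + 2 <= n)%N) \sum_(i < k) \sum_(j < k)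
            spin (sg x) * spin (sg (x ++ [:: i; j])))
  - J * (\sum_(x <- ball k n | (size x + 1 <= n)%N) \sum_(i < k)
            spin (sg x) * spin (sg (rcons x i))).

Definition bterm (R : realType) (k : nat) (h : bfield R k) (n : nat)
  (sg : word k -> bool) : R :=
  \sum_(x <- level k n.-1) \sum_(i < k)
     spin (sg x) * spin (sg (rcons x i)) * h x i (sg x) (sg (rcons x i)).

Definition weight (R : realType) (k : nat) (beta J Jp : R) (h : bfield R k)
  (n : nat) (sg : word k -> bool) : R :=
  expR (- beta * Ham J Jp n sg + bterm h n sg).

Definition Zpart (R : realType) (k : nat) (beta J Jp : R) (h : bfield R k)
  (n : nat) : R :=
  \sum_(om : {ffun seq_sub (ball k n) -> bool})
     weight beta J Jp h n (glue om (fun _ => true)).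

Definition mu (R : realType) (k : nat) (beta J Jp : R) (h : bfield R k)
  (n : nat) (sg : word k -> bool) : R :=
  weight beta J Jp h n sg / Zpart beta J Jp h n.

Definition compatible (R : realType) (k : nat) (beta J Jp : R) (h : bfield R k) : Prop :=
  forall (n : nat), (2 <= n)%N -> forall sg : word k -> bool,
    \sum_(om : {ffun seq_sub (level k n) -> bool}) mu beta J Jp h n (glue om sg)
    = mu beta J Jp h n.-1 sg.

(* The fixed-point system of the theorem, with a = e^{2 beta J}, b = e^{2 beta J_p};
   the edge x -> y is (x, i) with y = rcons x i, and S(y) = {rcons y j}. *)
Definition u_system (R : realType) (k : nat) (beta J Jp : R)
  (u1 u2 u3 : word k -> 'I_k -> R) : Prop :=
  let a := expR (2 * beta * J) in
  let b := expR (2 * beta * Jp) in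
  forall (x : word k) (i : 'I_k), let y := rcons x i in
  [/\ u1 x i = a * \prod_(j < k) ((b * u3 y j + 1) / (u3 y j + b)),
      u2 x i = a * \prod_(j < k) (((b * u2 y j + 1) * u3 y j) / ((u3 y j + b) * u1 y j))
    & u3 x i = a * \prod_(j < k) (((b * u3 y j + 1) * u1 y j) / ((u2 y j + b) * u3 y j))].

Definition u_of_h (R : realType) (k : nat) (beta J : R)
  (u1 u2 u3 : word k -> 'I_k -> R) (h : bfield R k) : Prop :=
  let a := expR (2 * beta * J) in
  forall (x : word k) (i : 'I_k),
  [/\ u1 x i = a * expR (h x i true true + h x i false true),
      u2 x i = a * expR (h x i false false + h x i false true)
    & u3 x i = a * expR (h x i true true + h x i true false)].

From HB Require Import structures.
From mathcomp Require Import all_boot all_order all_algebra.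
From mathcomp Require Import boolp reals sequences exp.
From mathcomp Require Import zify ring lra.
Import Order.TTheory GRing.Theory Num.Theory.
Local Open Scope ring_scope.

(* Summing the weight of V_(n+2) over the spins of the last level W_(n+2)
   factorises over the edges x -> y into W_(n+1): the leaves below y
   contribute a product of [leaf_sum]s, which depends only on the spins of
   x and y.  If this product is a constant times the boundary factor
   exp (sigma(x) sigma(y) h_xy) of the edge into y ([consistent]), the sum
   reproduces the weight of V_(n+1) up to a constant that also relates
   Z_(n+2) to Z_(n+1), whence compatibility.  For the field with h_{-+} = 0
   read off from u, the ratios of the leaf sums are exactly the factors of
   the fixed-point system, so that field is consistent.  Conversely, the
   relations between u and h determine sigma(x) sigma(y) h_xy on each edge up
   to an additive constant, which rescales all weights at a level by the
   same factor and leaves mu^(n) unchanged. *)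

Section CayleyTree.
Variable k : nat.

Lemma mem_level m (x : word k) : (x \in level k m) = (size x == m).
Proof.
apply/mapP/eqP => [[t _ ->]|hx]; first exact: size_tuple.
by exists (Tuple (introT eqP hx)); rewrite ?mem_enum.
Qed.

Lemma uniq_level m : uniq (level k m).
Proof. by rewrite map_inj_uniq ?enum_uniq //; apply: val_inj. Qed.

Lemma perm_levelS m :
  perm_eq (level k m.+1) [seq rcons x i | x <- level k m, i <- index_enum 'I_k].
Proof.
apply: uniq_perm; first exact: uniq_level.
  rewrite allpairs_uniq ?uniq_level ?index_enum_uniq //.
  by move=> [x i] [y j] _ _ /= /rcons_inj [-> ->].
move=> w; rewrite mem_level; apply/idP/allpairsP => [|[[x i] /= [+ _ ->]]].
  case/lastP: w => [//|x i]; rewrite size_rcons eqSS => hx.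
  by exists (x, i); rewrite /= mem_level hx mem_index_enum.
by rewrite mem_level size_rcons.
Qed.

Lemma big_levelS (T : Type) (idx : T) (op : Monoid.com_law idx) m (F : word k -> T) :
  \big[op/idx]_(y <- level k m.+1) F y =
  \big[op/idx]_(x <- level k m) \big[op/idx]_(i < k) F (rcons x i).
Proof. by rewrite (perm_big _ (perm_levelS m)) big_allpairs_dep. Qed.

Lemma ballS n : ball k n.+1 = ball k n ++ level k n.+1.
Proof. by rewrite /ball -addn1 iotaD map_cat flatten_cat /= cats0. Qed.

Lemma mem_ball n (x : word k) : (x \in ball k n) = (size x <= n)%N.
Proof.
elim: n => [|n IH]; first by rewrite /ball /= cats0 mem_level leqn0.
by rewrite ballS mem_cat IH mem_level (leq_eqVlt _ n.+1) ltnS orbC.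
Qed.

Lemma uniq_ball n : uniq (ball k n).
Proof.
elim: n => [|n IH]; first by rewrite /ball /= cats0 uniq_level.
rewrite ballS cat_uniq IH uniq_level andbT /=.
by apply/hasPn => x; rewrite mem_level mem_ball => /eqP ->; rewrite ltnn.
Qed.

Lemma big_ball_le (T : Type) (idx : T) (op : Monoid.com_law idx) n c (F : word k -> T) :
  \big[op/idx]_(x <- ball k n | (size x + c <= n)%N) F x =
  \big[op/idx]_(0 <= m < n.+1 - c) \big[op/idx]_(x <- level k m) F x.
Proof.
rewrite (big_nat_widen _ _ _ _ _ (leq_subr c n.+1)) [RHS]big_mkcond /=.
rewrite /ball big_flatten big_map /index_iota subn0; apply: eq_bigr => m _.
rewrite big_mkcond (eq_big_seq (fun x => if (m < n.+1 - c)%N then F x else idx)).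
  by case: ifP => _ //; rewrite big1.
move=> x; rewrite mem_level => /eqP ->.
by have -> : (m + c <= n)%N = (m < n.+1 - c)%N by lia.
Qed.

End CayleyTree.

Section Glue.
Context {k : nat} (L : seq (word k)).
Implicit Types (om : {ffun seq_sub L -> bool}) (sg : word k -> bool).

Definition restrict sg : {ffun seq_sub L -> bool} := [ffun w => sg (val w)].

Lemma glue_notin om sg x : x \notin L -> glue om sg x = sg x.
Proof. by move=> hx; rewrite /glue insubF //; apply/negbTE. Qed.

Lemma glue_in om sg sg' x : x \in L -> glue om sg x = glue om sg' x.
Proof. by move=> hx; rewrite /glue insubT. Qed.

Lemma glue_val om sg w : glue om sg (val w) = om w.
Proof. by rewrite /glue valK. Qed.

Lemma restrict_glue om sg : restrict (glue om sg) = om.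
Proof. by apply/ffunP => w; rewrite ffunE glue_val. Qed.

Lemma glue_restrict sg' sg x : glue (restrict sg') sg x = if x \in L then sg' x else sg x.
Proof. by rewrite /glue; case: insubP => [w -> <-|/negbTE ->]; rewrite ?ffunE. Qed.

Lemma big_seq_sub (T : Type) (idx : T) (op : Monoid.com_law idx) (F : word k -> T) :
  uniq L -> \big[op/idx]_(x <- L) F x = \big[op/idx]_(w : seq_sub L) F (val w).
Proof.
move=> uL; rewrite -(big_map val xpredT F); apply/perm_big/uniq_perm => //.
  by rewrite map_inj_uniq ?index_enum_uniq //; apply: val_inj.
move=> x; apply/idP/mapP => [hx|[w _ ->]]; last exact: ssvalP.
by exists (SeqSub hx); rewrite ?mem_index_enum.
Qed.

Lemma sum_glue_prod (R : comPzSemiRingType) (g : word k -> bool -> R) sg : uniq L ->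
  \sum_(om : {ffun seq_sub L -> bool}) \prod_(x <- L) g x (glue om sg x)
  = \prod_(x <- L) \sum_(s : bool) g x s.
Proof.
move=> uL; rewrite big_seq_sub // bigA_distr_bigA; apply: eq_bigr => om _.
by rewrite big_seq_sub //; apply: eq_bigr => w _; rewrite glue_val.
Qed.

End Glue.

Lemma sum_glue_cat (R : nmodType) {k : nat} (L1 L2 : seq (word k))
    (F : (word k -> bool) -> R) sg :
  uniq (L1 ++ L2) ->
  \sum_(om : {ffun seq_sub (L1 ++ L2) -> bool}) F (glue om sg)
  = \sum_(o1 : {ffun seq_sub L1 -> bool}) \sum_(o2 : {ffun seq_sub L2 -> bool})
      F (glue o2 (glue o1 sg)).
Proof.
rewrite cat_uniq => /and3P [_ /hasPn disj _].
pose s0 (x : word k) := true.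
pose join (o : {ffun seq_sub L1 -> bool} * {ffun seq_sub L2 -> bool}) :=
  restrict (L1 ++ L2) (glue o.2 (glue o.1 s0)).
pose split (om : {ffun seq_sub (L1 ++ L2) -> bool}) :=
  (restrict L1 (glue om s0), restrict L2 (glue om s0)).
have glue_join o sg' : glue (join o) sg' = glue o.2 (glue o.1 sg').
  apply: funext => x; rewrite glue_restrict mem_cat.
  case: (boolP (x \in L2)) => [x2|x2]; first by rewrite orbT; apply: glue_in.
  rewrite orbF !(glue_notin _ o.2) //.
  by case: ifP => [x1|/negbT x1]; [apply: glue_in | rewrite glue_notin].
have joinK : cancel join split.
  move=> [o1 o2]; rewrite /split glue_join restrict_glue /=; congr pair.
  apply/ffunP => w; rewrite !ffunE glue_notin ?glue_val //.
  by apply/negP => /disj; rewrite ssvalP.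
have splitK : cancel split join.
  move=> om; apply/ffunP => w; rewrite ffunE /= !glue_restrict.
  have := ssvalP w; rewrite mem_cat.
  by case: (ssval w \in L2); case: (ssval w \in L1) => //= _; apply: glue_val.
rewrite (reindex join) /=; last by exists split => ? _.
by rewrite pair_bigA; apply: eq_bigr => o _; rewrite glue_join.
Qed.

Section Model.
Context {R : realType} {k : nat} (beta J Jp : R).
Implicit Types (h : bfield R k) (sg : word k -> bool).

Lemma eq_Ham n sg sg' :
  (forall x, (size x <= n)%N -> sg x = sg' x) -> Ham J Jp n sg = Ham J Jp n sg'.
Proof.
move=> eq_sg; rewrite /Ham; congr (_ * _ - _ * _).
  apply: eq_bigr => x hx; apply: eq_bigr => i _; apply: eq_bigr => j _.
  by rewrite !eq_sg // ?size_cat /=; lia.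
apply: eq_bigr => x hx; apply: eq_bigr => i _.
by rewrite !eq_sg // ?size_rcons; lia.
Qed.

Lemma HamSS n sg :
  Ham J Jp n.+2 sg = Ham J Jp n.+1 sg
  - Jp * (\sum_(x <- level k n) \sum_(i < k) \sum_(j < k)
            spin (sg x) * spin (sg (x ++ [:: i; j])))
  - J * (\sum_(y <- level k n.+1) \sum_(j < k) spin (sg y) * spin (sg (rcons y j))).
Proof.
rewrite /Ham !big_ball_le !subSS !subn0 (big_nat_recr n) // (big_nat_recr n.+1) //=.
ring.
Qed.

Definition local_energy h (s0 s1 : bool) (y : word k) (j : 'I_k) (s : bool) : R :=
  beta * Jp * spin s0 * spin s + beta * J * spin s1 * spin s
  + spin s1 * spin s * h y j s1 s.

Definition leaf_sum h (s0 s1 : bool) (y : word k) (j : 'I_k) : R :=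
  \sum_(s : bool) expR (local_energy h s0 s1 y j s).

(* The energy of spin s at the leaf w = x ++ [:: i; j] given the spins of its
   parent and grandparent; junk value 0 on words of length < 2. *)
Definition leaf_energy h sg (w : word k) (s : bool) : R :=
  if rev w is j :: i :: rx then
    let x := rev rx in local_energy h (sg x) (sg (rcons x i)) (rcons x i) j s
  else 0.

Lemma leaf_energy_rcons2 h sg x i j s :
  leaf_energy h sg (rcons (rcons x i) j) s =
  local_energy h (sg x) (sg (rcons x i)) (rcons x i) j s.
Proof. by rewrite /leaf_energy !rev_rcons revK. Qed.

Lemma energy_split h n sg (om : {ffun seq_sub (level k n.+2) -> bool}) :
  - beta * Ham J Jp n.+2 (glue om sg) + bterm h n.+2 (glue om sg) =
  - beta * Ham J Jp n.+1 sg + \sum_(w <- level k n.+2) leaf_energy h sg w (glue om sg w).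
Proof.
set tau := glue om sg.
have tauE x : (size x <= n.+1)%N -> tau x = sg x.
  by move=> hx; rewrite /tau glue_notin // mem_level; apply/negP => /eqP; lia.
rewrite HamSS (eq_Ham _ _ _ tauE) /bterm /= !big_levelS.
have -> H SA SB ST : - beta * (H - Jp * SA - J * SB) + ST =
                     - beta * H + (beta * Jp * SA + beta * J * SB + ST) by ring.
congr (_ + _); rewrite !mulr_sumr -!big_split; apply: eq_big_seq => x /=.
rewrite mem_level => /eqP sx; rewrite !mulr_sumr -!big_split; apply: eq_bigr => i _ /=.
rewrite !mulr_sumr -!big_split; apply: eq_bigr => j _ /=.
have -> : x ++ [:: i; j] = rcons (rcons x i) j by rewrite -!cats1 -catA.
rewrite leaf_energy_rcons2 (tauE x) ?sx // (tauE (rcons x i)) ?size_rcons ?sx //.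
by rewrite /local_energy; ring.
Qed.

Definition consistent h : Prop :=
  forall x i s0 s1,
  \prod_(j < k) leaf_sum h s0 s1 (rcons x i) j =
  \prod_(j < k) leaf_sum h false true (rcons x i) j * expR (spin s0 * spin s1 * h x i s0 s1).

Definition level_const h n : R :=
  \prod_(x <- level k n) \prod_(i < k) \prod_(j < k) leaf_sum h false true (rcons x i) j.

Lemma sum_weight_level h n sg : consistent h ->
  \sum_(om : {ffun seq_sub (level k n.+2) -> bool}) weight beta J Jp h n.+2 (glue om sg)
  = level_const h n * weight beta J Jp h n.+1 sg.
Proof.
move=> hc.
under eq_bigr => om _ do rewrite /weight energy_split expRD expR_sum.
rewrite -mulr_sumr.
rewrite (sum_glue_prod _ _ (fun w s => expR (leaf_energy h sg w s))) ?uniq_level //.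
have -> : \prod_(w <- level k n.+2) \sum_(s : bool) expR (leaf_energy h sg w s) =
          \prod_(x <- level k n) \prod_(i < k) \prod_(j < k)
             leaf_sum h (sg x) (sg (rcons x i)) (rcons x i) j.
  rewrite !big_levelS; do 3 (apply: eq_bigr => ? _).
  by apply: eq_bigr => s _; rewrite leaf_energy_rcons2.
under eq_bigr => x _ do under eq_bigr => i _ do rewrite hc.
rewrite /level_const /weight expRD /bterm /= expR_sum mulrCA; congr (_ * _).
rewrite -big_split; apply: eq_bigr => x _.
by rewrite expR_sum -big_split.
Qed.

Lemma leaf_sum_gt0 h s0 s1 y j : 0 < leaf_sum h s0 s1 y j.
Proof. by rewrite /leaf_sum big_bool addr_gt0 ?expR_gt0. Qed.

Lemma level_const_gt0 h n : 0 < level_const h n.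
Proof. by do 3 apply: prodr_gt0 => ? _; apply: leaf_sum_gt0. Qed.

Lemma ZpartSS h n : consistent h ->
  Zpart beta J Jp h n.+2 = level_const h n * Zpart beta J Jp h n.+1.
Proof.
move=> hc; rewrite /Zpart ballS sum_glue_cat -?ballS ?uniq_ball // mulr_sumr.
by apply: eq_bigr => om _; apply: sum_weight_level.
Qed.

Lemma compatible_of_consistent h : consistent h -> compatible beta J Jp h.
Proof.
move=> hc [|[|n]] // _ sg.
rewrite /mu -mulr_suml sum_weight_level // ZpartSS // invfM mulrACA mulfV ?mul1r //.
by rewrite gt_eqF ?level_const_gt0.
Qed.

Lemma mu_gauge h h' (t : word k -> 'I_k -> R) n sg :
  (forall x i s0 s1,
     spin s0 * spin s1 * h' x i s0 s1 = spin s0 * spin s1 * h x i s0 s1 + t x i) ->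
  mu beta J Jp h' n sg = mu beta J Jp h n sg.
Proof.
move=> hh'; pose c := expR (\sum_(x <- level k n.-1) \sum_(i < k) t x i).
have weightE sg' : weight beta J Jp h' n sg' = weight beta J Jp h n sg' * c.
  rewrite /weight /c -expRD -addrA /bterm -big_split; congr (expR (_ + _)).
  apply: eq_bigr => x _; rewrite -big_split; apply: eq_bigr => i _.
  exact: hh'.
rewrite /mu /Zpart weightE; under eq_bigr do rewrite weightE.
by rewrite -mulr_suml invfM mulrACA mulfV ?mulr1 // gt_eqF ?expR_gt0.
Qed.

End Model.

Lemma expR_spinM (R : realType) (c : R) (s s' : bool) :
  expR (c * spin s * spin s') = if s == s' then expR c else (expR c)^-1.
Proof. by case: s; case: s'; rewrite /spin /= ?mulr1 ?mulrN1 ?opprK ?expRN. Qed.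

Section FieldOfU.
Context {R : realType} {k : nat} (beta J Jp : R) (u1 u2 u3 : word k -> 'I_k -> R).
Hypothesis u_gt0 : forall x i, 0 < u1 x i /\ 0 < u2 x i /\ 0 < u3 x i.

Local Notation a := (expR (2 * beta * J)).
Local Notation b := (expR (2 * beta * Jp)).

(* Gauge choice h_{-+} = 0, cf. [u_of_h_gauge]. *)
Definition field_of_u : bfield R k := fun x i s0 s1 =>
  match s0, s1 with
  | true, true => ln (u1 x i / a)
  | false, false => ln (u2 x i / a)
  | true, false => ln (u3 x i / u1 x i)
  | false, true => 0
  end.

Lemma u_of_field_of_u : u_of_h beta J u1 u2 u3 field_of_u.
Proof.
move=> x i; have [u1_gt0 [u2_gt0 u3_gt0]] := u_gt0 x i.
have a_gt0 := expR_gt0 (2 * beta * J).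
rewrite /field_of_u /= !addr0 expRD !lnK ?posrE ?divr_gt0 //.
by split; field; rewrite ?gt_eqF.
Qed.

Lemma expR_field_of_u x i s0 s1 :
  expR (spin s0 * spin s1 * field_of_u x i s0 s1) =
  match s0, s1 with
  | true, true => u1 x i / a
  | false, false => u2 x i / a
  | true, false => u1 x i / u3 x i
  | false, true => 1
  end.
Proof.
have [u1_gt0 [u2_gt0 u3_gt0]] := u_gt0 x i; have a_gt0 := expR_gt0 (2 * beta * J).
rewrite /field_of_u /spin; case: s0; case: s1;
  by rewrite ?(mulN1r, opprK, mul1r, mulr0, expR0, expRN) ?lnK ?invf_div ?posrE ?divr_gt0.
Qed.

Lemma leaf_sum_field_of_u y j s0 s1 :
  leaf_sum beta J Jp field_of_u s0 s1 y j =
  leaf_sum beta J Jp field_of_u false true y j *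
  match s0, s1 with
  | true, true => (b * u3 y j + 1) / (u3 y j + b)
  | false, false => (b * u2 y j + 1) * u3 y j / ((u3 y j + b) * u1 y j)
  | true, false => (u2 y j + b) * u3 y j / ((u3 y j + b) * u1 y j)
  | false, true => 1
  end.
Proof.
have [u1_gt0 [u2_gt0 u3_gt0]] := u_gt0 y j.
have P_gt0 := expR_gt0 (beta * Jp); have Q_gt0 := expR_gt0 (beta * J).
have aE : a = expR (beta * J) * expR (beta * J) by rewrite -expRD; congr expR; ring.
have bE : b = expR (beta * Jp) * expR (beta * Jp) by rewrite -expRD; congr expR; ring.
rewrite /leaf_sum !big_bool /local_energy !expRD !expR_spinM !expR_field_of_u aE bE.
set P := expR (beta * Jp); set Q := expR (beta * J).
by case: s0; case: s1; rewrite /= ?mulr1 //; field;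
  rewrite !gt_eqF ?addr_gt0 ?mulr_gt0.
Qed.

Lemma consistent_field_of_u :
  u_system beta J Jp u1 u2 u3 -> consistent beta J Jp field_of_u.
Proof.
move=> u_sys x i s0 s1.
rewrite (eq_bigr _ (fun j _ => leaf_sum_field_of_u (rcons x i) j s0 s1)) big_split /=.
congr (_ * _); rewrite expR_field_of_u.
have [-> -> ->] := u_sys x i; have a_neq0 : a != 0 by rewrite gt_eqF ?expR_gt0.
case: s0; case: s1 => /=; last 2 first.
- by rewrite big1.
- by rewrite [RHS]mulrAC divff ?mul1r.
- by rewrite [RHS]mulrAC divff ?mul1r.
rewrite -mulf_div divff // mul1r -prodf_div; apply: eq_bigr => j _.
have [u1_gt0 [u2_gt0 u3_gt0]] := u_gt0 (rcons x i) j.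
by field; rewrite !gt_eqF ?addr_gt0 ?mulr_gt0 ?expR_gt0.
Qed.

End FieldOfU.

Lemma u_of_h_gauge (R : realType) (k : nat) (beta J : R) (u1 u2 u3 : word k -> 'I_k -> R)
    (h h' : bfield R k) :
  u_of_h beta J u1 u2 u3 h -> u_of_h beta J u1 u2 u3 h' ->
  forall x i s0 s1, spin s0 * spin s1 * h' x i s0 s1 =
    spin s0 * spin s1 * h x i s0 s1 + (h x i false true - h' x i false true).
Proof.
move=> uh uh' x i s0 s1; have [e1 e2 e3] := uh x i; have [e1' e2' e3'] := uh' x i.
have a_neq0 : expR (2 * beta * J) != 0 by rewrite gt_eqF ?expR_gt0.
have /expR_inj sum1 := mulfI a_neq0 (etrans (esym e1) e1').
have /expR_inj sum2 := mulfI a_neq0 (etrans (esym e2) e2').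
have /expR_inj sum3 := mulfI a_neq0 (etrans (esym e3) e3').
by case: s0; case: s1; rewrite /spin /=; lra.
Qed.

Theorem theorem3p4 (R : realType) (k : nat) (beta J Jp : R)
  (u1 u2 u3 : word k -> 'I_k -> R) :
  (0 < k)%N -> 0 < beta ->
  (forall x i, 0 < u1 x i /\ 0 < u2 x i /\ 0 < u3 x i) ->
  u_system beta J Jp u1 u2 u3 ->
  (exists h : bfield R k, u_of_h beta J u1 u2 u3 h /\ compatible beta J Jp h) /\
  (forall h h' : bfield R k, u_of_h beta J u1 u2 u3 h -> u_of_h beta J u1 u2 u3 h' ->
     forall (n : nat), (1 <= n)%N -> forall sg : word k -> bool,
       mu beta J Jp h n sg = mu beta J Jp h' n sg).
Proof.
move=> _ _ u_gt0 u_sys; split.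
  exists (field_of_u beta J u1 u2 u3); split; first exact: u_of_field_of_u.
  exact/compatible_of_consistent/consistent_field_of_u.
move=> h h' uh uh' n _ sg; symmetry; apply: mu_gauge.
exact: u_of_h_gauge uh uh'.
Qed.
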